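(* Let $\mathcal{A}$ be a MAD family and let $\mathcal{B}=\{s_n:n\in\omega\}$ be a block sequence such that there is no infinite $W\subseteq\omega$ with $\bigcup_{n\in W}s_n\in\mathcal{I}(\mathcal{A})$. Then there are an infinite $X\subseteq\omega$ and a countable $\mathcal{A}_0\subseteq\mathcal{A}$ such that $\mathcal{A}\setminus\mathcal{A}_0\subseteq\mathcal{J}(\mathcal{B}_X)$.
   Context: A MAD family is a maximal family of infinite subsets of $\omega$ with pairwise finite intersections; $\mathcal{I}(\mathcal{A})$ is the ideal generated by $\mathcal{A}$ and the finite sets. A block sequence is $\{s_n:n\in\omega\}$ with each $s_n$ a nonempty finite subset of $\omega$ and $\max s_n<\min s_{n+1}$. For such $\mathcal{B}=\{s_n\}$ and infinite $X\subseteq\omega$, $\mathcal{B}_X=\{s_n:n\in X\}$ (enumerated in increasing order of $n$), and for a block sequence $\{t_k\}$ the ideal $\mathcal{J}(\{t_k\})$ is the set of $A\subseteq\omega$ with $\lim_k |A\cap t_k|/|t_k|=0$. *)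

From HB Require Import structures.
From mathcomp Require Import all_boot all_order all_algebra.
From mathcomp Require Import all_classical all_reals all_analysis.
From mathcomp Require Import Rstruct Rstruct_topology.
Set Implicit Arguments. Unset Strict Implicit. Unset Printing Implicit Defensive.
Import Order.TTheory GRing.Theory Num.Theory.
Local Open Scope classical_set_scope.
Local Open Scope ring_scope.

Definition AD_family (F : set (set nat)) : Prop :=
  (forall A, F A -> infinite_set A) /\
  (forall A B, F A -> F B -> A <> B -> finite_set (A `&` B)).

Definition MAD_family (F : set (set nat)) : Prop :=
  AD_family F /\ (forall G, AD_family G -> F `<=` G -> G = F).

(* I(A): the ideal generated by A and the finite sets *)
Definition gen_ideal (F : set (set nat)) : set (set nat) :=
  [set Y | exists l : seq (set nat),
      (forall A, A \in l -> F A) /\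
      finite_set (Y `\` \bigcup_(A in [set A | A \in l]) A)].

(* finite nonempty subsets of omega are represented by duplicate-free nonempty lists *)
Definition block_seq (s : nat -> seq nat) : Prop :=
  (forall n, uniq (s n)) /\ (forall n, s n <> [::]) /\
  (forall n x y, x \in s n -> y \in s n.+1 -> (x < y)%N).

Definition card_in (A : set nat) (t : seq nat) : nat :=
  count (fun x => `[< A x >]) t.

Definition J_ideal (t : nat -> seq nat) : set (set nat) :=
  [set A | (fun k => ((card_in A (t k))%:R / (size (t k))%:R : Rdefinitions.R)) @ \oo --> (0 : Rdefinitions.R)].

(* B_X = {s_n : n in X} enumerated increasingly: given the strictly increasing
   enumeration e of X, B_X is the block sequence k |-> s (e k). *)
Definition increasing_enum (X : set nat) (e : nat -> nat) : Prop :=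
  (forall k, (e k < e k.+1)%N) /\ range e = X.

From HB Require Import structures.
From mathcomp Require Import all_boot all_order all_algebra.
From mathcomp Require Import all_classical all_reals all_analysis.
From mathcomp Require Import Rstruct Rstruct_topology.
From mathcomp Require Import zify.
Import Order.TTheory GRing.Theory Num.Theory.
Local Open Scope classical_set_scope.
Set Implicit Arguments.

(* Fix j and call B heavy on a block t when |B ∩ t| >= |t|/(j+1).  Past the
   finitely many points where two of them meet, j+2 members of an almost
   disjoint family have disjoint traces on each block, so they cannot all be
   heavy on it.  Hence, starting from an infinite Y, repeatedly adding a member
   that is heavy on infinitely many blocks of Y and shrinking Y to those blocks
   stops after at most j+1 steps, with a finite L_j ⊆ A and an infinite Y' ⊆ Y
   on which every other member is eventually light.  Doing this for j = 0, 1, ...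
   gives a decreasing sequence Y_j; a diagonal e with e k ∈ Y_(k+1) gives
   X = range e, and each member outside A0 = ⋃ L_j is eventually light on
   B_X for every j, i.e. lies in J(B_X). *)

Lemma finite_nat_bounded (S : set nat) : finite_set S -> exists N, S `<=` `I_N.
Proof.
move=> /finite_seqP[l ->]; exists (\max_(x <- l) x).+1 => x /= xl.
by rewrite ltnS; apply: leq_bigmax_seq.
Qed.

Lemma finite_nat_near_notin (S : set nat) :
  finite_set S -> \forall n \near \oo, ~ S n.
Proof.
move=> /finite_nat_bounded[N SN]; exists N => // n /= Nn /SN /=; lia.
Qed.

Lemma infinite_nat_gt (Y : set nat) m :
  infinite_set Y -> exists2 n, Y n & (m < n)%N.
Proof.
move=> Yoo; apply: contrapT => noYgt; apply: Yoo.
apply: sub_finite_set (finite_II m.+1) => n Yn /=; rewrite ltnS leqNgt.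
by apply/negP => mn; apply: noYgt; exists n.
Qed.

Lemma increasing_nat_ge {e : nat -> nat} :
  (forall k, (e k < e k.+1)%N) -> forall k, (k <= e k)%N.
Proof. by move=> einc; elim=> // k IH; apply: leq_ltn_trans IH (einc k). Qed.

Lemma infinite_range_increasing (e : nat -> nat) :
  (forall k, (e k < e k.+1)%N) -> infinite_set (range e).
Proof.
move=> einc /finite_nat_bounded[N eN].
by have /= := eN _ (imageT e N); rewrite ltnNge increasing_nat_ge.
Qed.

Lemma increasing_diagonal (Y : nat -> set nat) :
  (forall k, infinite_set (Y k)) ->
  exists e : nat -> nat, (forall k, (e k < e k.+1)%N) /\ forall k, Y k (e k).
Proof.
move=> Yoo; have /choice[G GY] : forall k, exists Gk : nat -> nat,
    forall m, Y k (Gk m) /\ (m < Gk m)%N.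
  move=> k; have /choice[Gk ?] : forall m, exists n, Y k n /\ (m < n)%N.
    by move=> m; have [n] := infinite_nat_gt m (Yoo k); exists n.
  by exists Gk.
pose e := fix e k := if k is k'.+1 then G k (e k') else G 0%N 0%N.
exists e; split=> [k|[|k]]; first exact: (GY k.+1 _).2.
  exact: (GY 0%N 0%N).1.
exact: (GY k.+1 _).1.
Qed.

Lemma sum_count_flip (I J : Type) (r : I -> J -> bool) (l : seq I) (t : seq J) :
  (\sum_(i <- l) count (r i) t = \sum_(x <- t) count (r^~ x) l)%N.
Proof.
under eq_bigr do rewrite -sum1_count.
rewrite (exchange_big_dep predT) //=.
by apply: eq_bigr => x _; rewrite sum1_count.
Qed.

Lemma count_le1_uniq (T : eqType) (p : pred T) (l : seq T) : uniq l ->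
  {in l &, forall a b, p a -> p b -> a = b} -> (count p l <= 1)%N.
Proof.
move=> ul pinj; have [/hasP[a al pa]|/hasPn nop] := boolP (has p l); last first.
  by rewrite (eq_in_count (a2 := pred0)) ?count_pred0 // => x /nop /negbTE.
rewrite (eq_in_count (a2 := pred1 a)) ?count_uniq_mem ?leq_b1 // => x xl /=.
by apply/idP/eqP => [px|->//]; apply: pinj.
Qed.

Lemma block_seq_ge {s : nat -> seq nat} {n x : nat} :
  block_seq s -> x \in s n -> (n <= x)%N.
Proof.
case=> _ [ne sinc]; elim: n x => // n IH y ysn.
case E: (s n) (ne n) => [//|x t] _.
have xsn : x \in s n by rewrite E mem_head.
exact: leq_ltn_trans (IH _ xsn) (sinc _ _ _ xsn ysn).
Qed.

Definition heavy (j : nat) (B : set nat) (t : seq nat) :=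
  (size t <= j.+1 * card_in B t)%N.

Lemma sum_card_in_le {l : seq (set nat)} {t : seq nat} :
  {in t, forall x, count (fun B => `[< B x >]) l <= 1}%N ->
  (\sum_(B <- l) card_in B t <= size t)%N.
Proof.
move=> le1; rewrite (sum_count_flip (fun B x => `[< B x >])) -sum1_size big_seq_cond.
by rewrite [leqRHS]big_seq_cond; apply: leq_sum => x /andP[/le1].
Qed.

Lemma J_ideal_eventually_light (t : nat -> seq nat) (B : set nat) :
  (forall k, t k <> [::]) -> (forall j, \forall k \near \oo, ~~ heavy j B (t k)) ->
  J_ideal t B.
Proof.
move=> tne light; apply/(@cvgrPdist_lt _ Rdefinitions.R^o) => eps eps0.
have [j _ /(_ j (leqnn j)) jeps] := near_infty_natSinv_lt (PosNum eps0).
near=> k.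
have zk : (0 < (size (t k))%:R :> Rdefinitions.R)%R.
  by rewrite ltr0n lt0n size_eq0; apply/eqP.
rewrite sub0r normrN ger0_norm ?divr_ge0 //; apply: lt_trans jeps.
rewrite ltr_pdivrMr // mulrC ltr_pdivlMr // -natrM ltr_nat mulnC ltnNge.
by near: k; apply: light.
Unshelve. all: end_near.
Qed.

Section AlmostDisjoint.
Variables (A : set (set nat)) (s : nat -> seq nat).
Hypotheses (A_AD : AD_family A) (s_block : block_seq s).

Lemma not_all_heavy_near j (l : seq (set nat)) :
  uniq l -> {in l, forall B, A B} -> (j.+1 < size l)%N ->
  \forall n \near \oo, ~ {in l, forall B, heavy j B (s n)}.
Proof.
move=> ul lA jl.
(* Past max P, each point of s n lies in at most one member of l, so the
   densities of the members of l on s n add up to at most 1. *)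
pose P := \bigcup_(B in [set` l]) \bigcup_(C in [set` l] `\ B) (B `&` C).
have Pfin : finite_set P.
  apply: bigcup_finite => // B lB; apply: bigcup_finite => [|C [lC CB]].
    exact: sub_finite_set (finite_seq l).
  by apply: A_AD.2; [exact: lA|exact: lA|exact/nesym].
have [N PN] := finite_nat_bounded Pfin.
exists N => // n /= Nn lheavy.
have le1 : {in s n, forall x, count (fun B => `[< B x >]) l <= 1}%N.
  move=> x xsn; apply: count_le1_uniq => // B C lB lC /asboolP Bx /asboolP Cx.
  apply: contrapT => BC.
  have nPx : ~ P x by move=> /PN /=; have := block_seq_ge s_block xsn; lia.
  apply: nPx; exists B => //; exists C => //=.
  by split => //; apply/nesym.
have sn0 : (0 < size (s n))%N by case: (s n) (s_block.2.1 n).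
have lower : (size l * size (s n) <= j.+1 * \sum_(B <- l) card_in B (s n))%N.
  rewrite -sum1_size big_distrl big_distrr !big_seq /=.
  by apply: leq_sum => B /lheavy; rewrite mul1n.
have := leq_trans lower (leq_mul (leqnn j.+1) (sum_card_in_le le1)).
by rewrite leq_mul2r leqNgt jl orbF; apply/negP; rewrite -lt0n.
Qed.

Definition light_outside (l : seq (set nat)) (Y : set nat) (j : nat) :=
  forall B, A B -> B \notin l -> \forall n \near \oo, Y n -> ~~ heavy j B (s n).

Definition light_refinement j (Y : set nat) (l : seq (set nat)) (Y' : set nat) :=
  [/\ Y' `<=` Y, infinite_set Y', {in l, forall B, A B} & light_outside l Y' j].

Lemma exists_light_refinement_of_heavy j d : forall l Y, (size l + d)%N = j.+2 ->
  uniq l -> {in l, forall B, A B} -> infinite_set Y ->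
  (forall n, Y n -> {in l, forall B, heavy j B (s n)}) ->
  exists l' Y', light_refinement j Y l' Y'.
Proof.
(* Each step adds to l a member heavy on infinitely many blocks of Y; by
   not_all_heavy_near this cannot happen once l has j+2 members. *)
elim: d => [|d IH] l Y lsize ul lA Yoo Yheavy.
  have jl : (j.+1 < size l)%N by rewrite -(addn0 (size l)) lsize.
  have [N _ notheavy] := not_all_heavy_near j ul lA jl.
  have [n Yn Nn] := infinite_nat_gt N Yoo.
  by case: (notheavy n (ltnW Nn)); apply: Yheavy.
have [light|] := pselect (light_outside l Y j); first by exists l, Y; split.
move=> /existsNP[B /not_implyP[AB /not_implyP[Bl notlight]]].
pose Y1 := Y `&` [set n | heavy j B (s n)].
have Y1oo : infinite_set Y1.
  move=> /finite_nat_near_notin Y1near; apply: notlight.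
  by apply: filterS Y1near => n nY1 Yn; apply/negP => Bn; apply: nY1.
have Blsize : (size (B :: l) + d)%N = j.+2 by rewrite /= addSnnS.
have uBl : uniq (B :: l) by rewrite /= Bl.
have BlA : {in B :: l, forall C, A C}.
  by move=> C; rewrite inE => /predU1P[->|/lA].
have Y1heavy : forall n, Y1 n -> {in B :: l, forall C, heavy j C (s n)}.
  by move=> n [Yn Bn] C; rewrite inE => /predU1P[->|/(Yheavy n Yn)].
have [l' [Y' [Y'Y1 Y'oo l'A light]]] := IH _ _ Blsize uBl BlA Y1oo Y1heavy.
by exists l', Y'; split=> //; apply: subset_trans Y'Y1 (@subIsetl _ _ _).
Qed.

Lemma exists_light_refinement j Y : infinite_set Y ->
  exists l Y', light_refinement j Y l Y'.
Proof. by move=> Yoo; apply: (@exists_light_refinement_of_heavy j j.+2 [::]). Qed.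

Lemma nested_light_refinements :
  exists (Y : nat -> set nat) (L : nat -> seq (set nat)),
    forall j, light_refinement j (Y j) (L j) (Y j.+1).
Proof.
have /choice[F FP] : forall j, exists Fj : set nat -> seq (set nat) * set nat,
    forall Y, infinite_set Y -> light_refinement j Y (Fj Y).1 (Fj Y).2.
  move=> j; have /choice[Fj ?] : forall Y, exists q : seq (set nat) * set nat,
      infinite_set Y -> light_refinement j Y q.1 q.2.
    move=> Y; have [Yoo|nYoo] := pselect (infinite_set Y); last first.
      by exists ([::], Y) => /nYoo.
    by have [l [Y' ref]] := exists_light_refinement j Yoo; exists (l, Y').
  by exists Fj.
pose Y := fix Y j := if j is j'.+1 then (F j' (Y j')).2 else setT.
have Yoo j : infinite_set (Y j).
  by elim: j => [|j IH]; [exact: infinite_nat | have [] := FP j _ IH].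
by exists Y, (fun j => (F j (Y j)).1) => j; apply: FP.
Qed.

Lemma AD_diagonal_J_ideal : exists (X : set nat) (A0 : set (set nat)),
  infinite_set X /\ countable A0 /\ A0 `<=` A /\
  exists e : nat -> nat, increasing_enum X e /\
    A `\` A0 `<=` J_ideal (fun k => s (e k)).
Proof.
have [Y [L /all_and4[Ydec Yoo LA Llight]]] := nested_light_refinements.
have Ynested : {homo Y : j k / (j <= k)%N >-> k `<=` j}.
  apply: (homo_leq _ _ Ydec) => [Z|Z2 Z1 Z3 Z21 Z32]; first exact: subset_refl.
  exact: subset_trans Z32 Z21.
have [e [einc eY]] := increasing_diagonal (fun k => Y k.+1) Yoo.
exists (range e), (\bigcup_(j in setT) [set` L j]).
split; first exact: infinite_range_increasing.
split; first by apply: bigcup_countable => // j _; exact: finite_set_countable.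
split; first by move=> B [j _ /LA].
exists e; split=> // B [AB BA0].
apply: J_ideal_eventually_light => [k|j]; first exact: s_block.2.1.
have /Llight[//|N _ light] : B \notin L j by apply/negP => BL; apply: BA0; exists j.
exists (maxn j N) => // k /=; rewrite geq_max => /andP[jk Nk].
apply: (light (e k)); first exact: leq_trans Nk (increasing_nat_ge einc k).
by apply: Ynested (eY k); rewrite ltnS.
Qed.

End AlmostDisjoint.

Theorem mainTheorem16 (A : set (set nat)) (s : nat -> seq nat) :
  MAD_family A ->
  block_seq s ->
  ~ (exists W : set nat, infinite_set W /\
       gen_ideal A (\bigcup_(n in W) [set x | x \in s n])) ->
  exists (X : set nat) (A0 : set (set nat)),
    infinite_set X /\ countable A0 /\ A0 `<=` A /\
    exists e : nat -> nat, increasing_enum X e /\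
      A `\` A0 `<=` J_ideal (fun k => s (e k)).
Proof.
by move=> [A_AD _] s_block _; apply: AD_diagonal_J_ideal.
Qed.
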